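(* Let $f:\mathbb{R}^d\to\mathbb{R}^d$ be a linear isomorphism having real eigenvalues $\lambda$ and $\mu$ with $\lambda>1$ and $0<\mu<1$. Then $f$ does not satisfy the topological shadowing property.
   Context: Let $(X,d)$ be a metric space and $f:X\to X$ a homeomorphism; $\mathcal{C}^+=\{\epsilon:X\to\mathbb{R}^+ : \epsilon \text{ continuous}\}$. For $\delta\in\mathcal{C}^+$, a sequence $\{x_n\}_{n\in\mathbb{Z}}\subset X$ is a $\delta$-pseudo-orbit of $f$ if $d(f(x_n),x_{n+1})<\delta(f(x_n))$ for every $n\in\mathbb{Z}$. For $\epsilon\in\mathcal{C}^+$, the sequence $\{x_n\}$ is $\epsilon$-shadowed by an orbit if there is $y\in X$ with $d(f^n(y),x_n)<\epsilon(x_n)$ for every $n\in\mathbb{Z}$. The homeomorphism $f$ satisfies the topological shadowing property if for every $\epsilon\in\mathcal{C}^+$ there exists $\delta\in\mathcal{C}^+$ such that every $\delta$-pseudo-orbit is $\epsilon$-shadowed by an orbit. $\mathbb{R}^d$ carries the Euclidean metric. *)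

From mathcomp Require Import ssreflect ssrfun ssrbool eqtype ssrnat seq fintype bigop.
From Stdlib Require Import Reals ZArith.
Open Scope R_scope.

Definition metric_continuous {X : Type} (dist : X -> X -> R) (e : X -> R) : Prop :=
  forall x (eps : R), 0 < eps ->
    exists delta, 0 < delta /\ forall y, dist x y < delta -> Rabs (e y - e x) < eps.

Definition Cplus {X : Type} (dist : X -> X -> R) (e : X -> R) : Prop :=
  (forall x, 0 < e x) /\ metric_continuous dist e.

Definition pseudo_orbit {X : Type} (dist : X -> X -> R) (f : X -> X)
  (delta : X -> R) (x : Z -> X) : Prop :=
  forall n : Z, dist (f (x n)) (x (n + 1)%Z) < delta (f (x n)).

Definition orbit_of {X : Type} (f : X -> X) (y : X) (o : Z -> X) : Prop :=
  o 0%Z = y /\ forall n : Z, o (n + 1)%Z = f (o n).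

Definition eps_shadowed {X : Type} (dist : X -> X -> R) (f : X -> X)
  (eps : X -> R) (x : Z -> X) : Prop :=
  exists (y : X) (o : Z -> X), orbit_of f y o /\
    forall n : Z, dist (o n) (x n) < eps (x n).

Definition topological_shadowing {X : Type} (dist : X -> X -> R) (f : X -> X) : Prop :=
  forall eps, Cplus dist eps ->
    exists delta, Cplus dist delta /\
      forall x : Z -> X, pseudo_orbit dist f delta x -> eps_shadowed dist f eps x.

Definition Rd (d : nat) : Type := 'I_d -> R.

Definition euclid_dist {d : nat} (x y : Rd d) : R :=
  sqrt (\big[Rplus/0]_(i < d) (x i - y i) ^ 2).

Definition vadd {d : nat} (x y : Rd d) : Rd d := fun i => x i + y i.
Definition vscale {d : nat} (a : R) (x : Rd d) : Rd d := fun i => a * x i.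
Definition vzero {d : nat} : Rd d := fun _ => 0.

Definition linear_map {d : nat} (f : Rd d -> Rd d) : Prop :=
  (forall x y, f (vadd x y) = vadd (f x) (f y)) /\
  (forall a x, f (vscale a x) = vscale a (f x)).

Definition linear_iso {d : nat} (f : Rd d -> Rd d) : Prop :=
  linear_map f /\ exists g : Rd d -> Rd d, (forall x, g (f x) = x) /\ (forall y, f (g y) = y).

Definition real_eigenvalue {d : nat} (f : Rd d -> Rd d) (lam : R) : Prop :=
  exists v : Rd d, v <> vzero /\ f v = vscale lam v.

(* A pseudo-orbit with a single jump is built from the two eigenvectors: for
   n <= 0 it is the backward orbit of the stable eigenvector v, for n >= 1 the
   forward orbit of f v + t u, where u is the unstable eigenvector and the jump
   t u is below delta (f v).  Shadowing is tested against the continuous weight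
   (1 + |x|^2)^(-P).  Along the backward half |x_(-k)|^2 grows like mu^(-2k),
   along the forward half |x_(1+k)|^2 like lam^(2k); for P large the weight
   therefore shrinks geometrically faster than f (backwards) or f^-1 (forwards)
   can amplify an error.  So a shadowing orbit passes exactly through x_0 and
   x_1, which contradicts x_1 <> f x_0. *)

From HB Require Import structures.
From mathcomp Require Import ssreflect ssrfun ssrbool eqtype ssrnat seq fintype bigop.
From Stdlib Require Import Reals ZArith Lra Lia FunctionalExtensionality.
Open Scope R_scope.

Lemma Rplus_associative : associative Rplus.
Proof. by move=> *; ring. Qed.

HB.instance Definition _ :=
  Monoid.isComLaw.Build R 0 Rplus Rplus_associative Rplus_comm Rplus_0_l.

Section RealSums.
Variables (I : Type) (r : seq I) (P : pred I).
Implicit Types F G : I -> R.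

Lemma sum_Rle F G : (forall i, P i -> F i <= G i) ->
  \big[Rplus/0]_(i <- r | P i) F i <= \big[Rplus/0]_(i <- r | P i) G i.
Proof. by move=> FG; elim/big_rec2: _ => [|i s1 s2 Pi]; [lra | have := FG i Pi; lra]. Qed.

Lemma sum_Rge0 F : (forall i, P i -> 0 <= F i) -> 0 <= \big[Rplus/0]_(i <- r | P i) F i.
Proof. by move=> F_ge0; elim/big_rec: _ => [|i s Pi]; [lra | have := F_ge0 i Pi; lra]. Qed.

Lemma sum_Rmult_l c F :
  \big[Rplus/0]_(i <- r | P i) (c * F i) = c * \big[Rplus/0]_(i <- r | P i) F i.
Proof. by elim/big_rec2: _ => [|i s1 s2 _ ->]; ring. Qed.

Lemma Rabs_sum_le F :
  Rabs (\big[Rplus/0]_(i <- r | P i) F i) <= \big[Rplus/0]_(i <- r | P i) Rabs (F i).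
Proof.
elim/big_rec2: _ => [|i s1 s2 _ IH]; first by rewrite Rabs_R0; lra.
by apply: Rle_trans (Rabs_triang _ _) _; lra.
Qed.

End RealSums.

Section SquaredNorm.
Context {d : nat}.
Implicit Types x y z a b : Rd d.

Definition sqnorm x : R := \big[Rplus/0]_(i < d) x i ^ 2.

Definition vsub x y : Rd d := fun i => x i - y i.

Lemma euclid_distE x y : euclid_dist x y = sqrt (sqnorm (vsub x y)).
Proof. by []. Qed.

Lemma sqnorm_ge0 x : 0 <= sqnorm x.
Proof. by apply: sum_Rge0 => i _; apply: pow2_ge_0. Qed.

Lemma sqr_coord_le_sqnorm x i : x i ^ 2 <= sqnorm x.
Proof.
rewrite /sqnorm (bigD1 i) // -{1}[x i ^ 2]Rplus_0_r.
by apply: Rplus_le_compat_l; apply: sum_Rge0 => j _; apply: pow2_ge_0.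
Qed.

Lemma Rabs_coord_le x i : Rabs (x i) <= sqrt (sqnorm x).
Proof.
rewrite -sqrt_Rsqr_abs; apply: sqrt_le_1_alt.
by rewrite Rsqr_pow2; apply: sqr_coord_le_sqnorm.
Qed.

Lemma sqnorm_vscale c x : sqnorm (vscale c x) = c ^ 2 * sqnorm x.
Proof. by rewrite /sqnorm -sum_Rmult_l; apply: eq_bigr => i _; rewrite /vscale; ring. Qed.

Lemma sqnorm_vadd_ge a b : sqnorm b / 2 - sqnorm a <= sqnorm (vadd a b).
Proof.
have -> : sqnorm b / 2 - sqnorm a = \big[Rplus/0]_(i < d) (/ 2 * b i ^ 2 + - 1 * a i ^ 2).
  by rewrite big_split /= !sum_Rmult_l -/(sqnorm a) -/(sqnorm b); lra.
by apply: sum_Rle => i _; rewrite /vadd; have := pow2_ge_0 (2 * a i + b i); nra.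
Qed.

Lemma sqnorm_le0 x : sqnorm x <= 0 -> x = vzero.
Proof.
move=> x_le0; apply: functional_extensionality => i.
by have := sqr_coord_le_sqnorm x i; rewrite /vzero /=; nra.
Qed.

Lemma sqnorm_gt0 x : x <> vzero -> 0 < sqnorm x.
Proof. by move=> x_nz; apply: Rnot_le_lt => /sqnorm_le0. Qed.

Lemma vsub_eq0 a b : (forall c, 0 < c -> sqnorm (vsub a b) < c) -> a = b.
Proof.
move=> small; have /sqnorm_le0 ab0 : sqnorm (vsub a b) <= 0.
  by apply: Rnot_lt_le => /small; lra.
apply: functional_extensionality => i.
by have := congr1 (fun w => w i) ab0; rewrite /vsub /vzero; lra.
Qed.

Lemma sqnorm_lt_of_dist_lt a b e : euclid_dist a b < e -> sqnorm (vsub a b) < e ^ 2.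
Proof.
rewrite euclid_distE => ab_e.
have := sqrt_sqrt _ (sqnorm_ge0 (vsub a b)); have := sqrt_pos (sqnorm (vsub a b)).
by nra.
Qed.

Lemma euclid_dist_refl x : euclid_dist x x = 0.
Proof.
rewrite euclid_distE.
have -> : vsub x x = vscale 0 x.
  by apply: functional_extensionality => i; rewrite /vsub /vscale; ring.
by rewrite sqnorm_vscale /= !Rmult_0_l sqrt_0.
Qed.

Lemma exists_small_step a u e : 0 < e ->
  exists t, 0 < t /\ euclid_dist a (vadd a (vscale t u)) < e.
Proof.
move=> e_gt0; set n := sqrt (sqnorm u); have n_ge0 : 0 <= n by apply: sqrt_pos.
exists (e / (n + 1)); split; first by apply: Rdiv_lt_0_compat; lra.
rewrite euclid_distE.
have -> : vsub a (vadd a (vscale (e / (n + 1)) u)) = vscale (- (e / (n + 1))) u.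
  by apply: functional_extensionality => i; rewrite /vsub /vadd /vscale; ring.
rewrite sqnorm_vscale sqrt_mult; [|apply: pow2_ge_0 | apply: sqnorm_ge0].
rewrite -/n -Rsqr_pow2 sqrt_Rsqr_abs Rabs_Ropp Rabs_pos_eq; last first.
  by apply: Rlt_le; apply: Rdiv_lt_0_compat; lra.
have : e / (n + 1) * (n + 1) = e by field; lra.
have : 0 < e / (n + 1) by apply: Rdiv_lt_0_compat; lra.
by nra.
Qed.

Lemma vadd_vscale_eq_id a u t : vadd a (vscale t u) = a -> t <> 0 -> u = vzero.
Proof.
move=> a_fixed t_nz; apply: functional_extensionality => i.
have := congr1 (fun w => w i) a_fixed; rewrite /vadd /vscale /vzero => ati.
by apply: (Rmult_eq_reg_l t); lra.
Qed.

Lemma sqnorm_continuous : metric_continuous (@euclid_dist d) sqnorm.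
Proof.
move=> x e e_gt0.
set M := \big[Rplus/0]_(i < d) Rabs (x i).
have M_ge0 : 0 <= M by apply: sum_Rge0 => i _; apply: Rabs_pos.
exists (Rmin 1 (e / (1 + 2 * M))); split.
  by apply: Rmin_pos; [lra | apply: Rdiv_lt_0_compat; lra].
move=> y; set h := euclid_dist x y => xy_small.
have h_ge0 : 0 <= h by apply: sqrt_pos.
have h_le1 : h <= 1 by have := Rmin_l 1 (e / (1 + 2 * M)); lra.
have h_lt : h * (1 + 2 * M) < e.
  have -> : e = e / (1 + 2 * M) * (1 + 2 * M) by field; lra.
  by apply: Rmult_lt_compat_r; [lra | have := Rmin_r 1 (e / (1 + 2 * M)); lra].
have sqnorm_diff : sqnorm y - sqnorm x =
    sqnorm (vsub x y) + 2 * \big[Rplus/0]_(i < d) (x i * (y i - x i)).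
  rewrite -sum_Rmult_l /sqnorm -big_split /=.
  have -> : \big[Rplus/0]_(i < d) y i ^ 2 =
      \big[Rplus/0]_(i < d) (vsub x y i ^ 2 + 2 * (x i * (y i - x i)) + x i ^ 2).
    by apply: eq_bigr => i _; rewrite /vsub; ring.
  by rewrite big_split /=; ring.
have cross_le : Rabs (\big[Rplus/0]_(i < d) (x i * (y i - x i))) <= M * h.
  apply: Rle_trans (Rabs_sum_le _ _ _ _) _; rewrite Rmult_comm -sum_Rmult_l.
  apply: sum_Rle => i _; rewrite Rabs_mult Rmult_comm.
  apply: Rmult_le_compat_r; first exact: Rabs_pos.
  by rewrite -Rabs_Ropp Ropp_minus_distr; apply: Rabs_coord_le.
have sq_h : sqnorm (vsub x y) = h ^ 2.
  by rewrite /h euclid_distE /= Rmult_1_r sqrt_sqrt //; apply: sqnorm_ge0.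
rewrite sqnorm_diff; apply: Rle_lt_trans (Rabs_triang _ _) _.
rewrite sq_h Rabs_mult Rabs_pos_eq; last exact: pow2_ge_0.
rewrite Rabs_pos_eq; last lra.
by nra.
Qed.

End SquaredNorm.

Lemma metric_continuous_comp {X : Type} (dist : X -> X -> R) (e : X -> R) (phi : R -> R) :
  metric_continuous dist e -> (forall x, continuity_pt phi (e x)) ->
  metric_continuous dist (fun x => phi (e x)).
Proof.
move=> e_cont phi_cont x eps eps_gt0.
have [alpha [alpha_gt0 phi_close]] := phi_cont x eps eps_gt0.
have [delta [delta_gt0 e_close]] := e_cont x alpha alpha_gt0.
exists delta; split => // y xy_small.
case: (Req_dec (e y) (e x)) => [-> | exy]; first by rewrite Rminus_diag Rabs_R0.
by apply: phi_close; split; [split; last apply: not_eq_sym | apply: e_close].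
Qed.

Definition weight {d : nat} (P : nat) (x : Rd d) : R := / (1 + sqnorm x) ^ P.

Lemma weight_gt0 {d : nat} P (x : Rd d) : 0 < weight P x.
Proof. by apply/Rinv_0_lt_compat/pow_lt; have := sqnorm_ge0 x; lra. Qed.

Lemma weight_le1 {d : nat} P (x : Rd d) : weight P x <= 1.
Proof.
rewrite /weight -Rinv_1; apply: Rinv_le_contravar; first lra.
by apply: pow_R1_Rle; have := sqnorm_ge0 x; lra.
Qed.

Lemma weight_Cplus {d : nat} P : Cplus (@euclid_dist d) (weight P).
Proof.
split; first exact: weight_gt0.
apply: (@metric_continuous_comp _ _ _ (fun s => / (1 + s) ^ P) sqnorm_continuous) => x.
by have := sqnorm_ge0 x => x_ge0; reg; apply: pow_nonzero; lra.
Qed.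

Section LinearMaps.
Context {d : nat}.
Implicit Types (h f g : Rd d -> Rd d) (x y z a b u v : Rd d).

Lemma linear_vzero h : linear_map h -> h vzero = vzero.
Proof.
move=> [_ h_scale]; have vzeroE : vzero = vscale 0 (vzero : Rd d).
  by apply: functional_extensionality => i; rewrite /vscale /vzero; ring.
by rewrite vzeroE h_scale; apply: functional_extensionality => i; rewrite /vscale; ring.
Qed.

Lemma linear_vsub h a b : linear_map h -> h (vsub a b) = vsub (h a) (h b).
Proof.
move=> [h_add h_scale]; have vsubE x y : vsub x y = vadd x (vscale (-1) y).
  by apply: functional_extensionality => i; rewrite /vsub /vadd /vscale; ring.
by rewrite !vsubE h_add h_scale.
Qed.

Lemma linear_iter h k : linear_map h -> linear_map (Nat.iter k h).
Proof.
move=> [h_add h_scale]; split.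
  by elim: k => [|k IH] x y //=; rewrite IH h_add.
by elim: k => [|k IH] c x //=; rewrite IH h_scale.
Qed.

Lemma linear_inverse f g : linear_map f -> cancel f g -> cancel g f -> linear_map g.
Proof.
move=> [f_add f_scale] fK gK; split => [x y | c x].
  by rewrite -{1}(gK x) -{1}(gK y) -f_add fK.
by rewrite -{1}(gK x) -f_scale fK.
Qed.

Lemma iter_eigen h lam u k : linear_map h -> h u = vscale lam u ->
  Nat.iter k h u = vscale (lam ^ k) u.
Proof.
move=> [_ h_scale] hu; elim: k => [|k IH] /=.
  by apply: functional_extensionality => i; rewrite /vscale; ring.
rewrite IH h_scale hu; apply: functional_extensionality => i; rewrite /vscale; ring.
Qed.

Lemma sqnorm_iter_eigen h lam u k : linear_map h -> h u = vscale lam u ->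
  sqnorm (Nat.iter k h u) = (lam ^ 2) ^ k * sqnorm u.
Proof.
move=> h_lin hu; rewrite (iter_eigen h lam u k h_lin hu) sqnorm_vscale -!pow_mult.
by rewrite Nat.mul_comm.
Qed.

Lemma inverse_eigen f g mu v : linear_map f -> cancel f g -> f v = vscale mu v -> mu <> 0 ->
  g v = vscale (/ mu) v.
Proof.
move=> [_ f_scale] fK fv mu_nz.
transitivity (g (f (vscale (/ mu) v))); last exact: fK.
rewrite f_scale fv; congr g.
by apply: functional_extensionality => i; rewrite /vscale; field.
Qed.

Definition basis_vec (i : 'I_d) : Rd d := fun j => if i == j then 1 else 0.

Lemma linear_coordE h z j : linear_map h ->
  h z j = \big[Rplus/0]_(i < d) (z i * h (basis_vec i) j).
Proof.
move=> h_lin; have [h_add h_scale] := h_lin.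
have vsum_coordE (F : 'I_d -> Rd d) k :
    (\big[vadd/vzero]_(i < d) F i) k = \big[Rplus/0]_(i < d) F i k.
  by elim/big_rec2: _ => [|i V s _ <-].
have zE : z = \big[vadd/vzero]_(i < d) vscale (z i) (basis_vec i).
  apply: functional_extensionality => k; rewrite vsum_coordE (bigD1 k) // big1 => [|i ik].
    by rewrite Monoid.mulm1 /vscale /basis_vec eqxx; ring.
  by rewrite /vscale /basis_vec (negbTE ik); ring.
rewrite {1}zE; elim/big_rec2: _ => [|i V s _ <-]; first by rewrite linear_vzero.
by rewrite h_add h_scale.
Qed.

Lemma linear_sqnorm_bound h : linear_map h ->
  exists C, 0 < C /\ forall z, sqnorm (h z) <= C * sqnorm z.
Proof.
move=> h_lin; set m := fun j => \big[Rplus/0]_(i < d) Rabs (h (basis_vec i) j).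
have m_ge0 j : 0 <= m j by apply: sum_Rge0 => i _; apply: Rabs_pos.
exists (1 + \big[Rplus/0]_(j < d) m j ^ 2); split.
  have : 0 <= \big[Rplus/0]_(j < d) m j ^ 2 by apply: sum_Rge0 => j _; apply: pow2_ge_0.
  lra.
move=> z; have z_ge0 := sqnorm_ge0 z.
have coord_le j : h z j ^ 2 <= sqnorm z * m j ^ 2.
  have bound_ge0 : 0 <= sqrt (sqnorm z) * m j by apply: Rmult_le_pos; [apply: sqrt_pos|].
  have : Rabs (h z j) <= Rabs (sqrt (sqnorm z) * m j).
    rewrite (Rabs_pos_eq _ bound_ge0) linear_coordE //.
    apply: Rle_trans (Rabs_sum_le _ _ _ _) _.
    rewrite -sum_Rmult_l; apply: sum_Rle => i _; rewrite Rabs_mult.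
    by apply: Rmult_le_compat_r; [apply: Rabs_pos | apply: Rabs_coord_le].
  by move=> /Rsqr_le_abs_1; rewrite !Rsqr_pow2 Rpow_mult_distr pow2_sqrt.
have : sqnorm (h z) <= sqnorm z * \big[Rplus/0]_(j < d) m j ^ 2.
  by rewrite -sum_Rmult_l; apply: sum_Rle => j _; apply: coord_le.
by nra.
Qed.

Lemma sqnorm_iter_saddle_ge h lam mu u w t k :
  linear_map h -> h u = vscale lam u -> h w = vscale mu w -> mu ^ 2 <= 1 ->
  t ^ 2 * sqnorm u / 2 * (lam ^ 2) ^ k - sqnorm w <= sqnorm (Nat.iter k h (vadd w (vscale t u))).
Proof.
move=> h_lin hu hw mu_le1; have [iter_add iter_scale] := linear_iter h k h_lin.
rewrite iter_add iter_scale; apply: Rle_trans (sqnorm_vadd_ge _ _).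
rewrite sqnorm_vscale (sqnorm_iter_eigen _ _ _ _ h_lin hu).
rewrite (sqnorm_iter_eigen _ _ _ _ h_lin hw).
have : (mu ^ 2) ^ k <= 1 by rewrite -(pow1 k); apply: pow_incr; nra.
by have := sqnorm_ge0 w; nra.
Qed.

Lemma sqnorm_iter_le h C k z : (forall z, sqnorm (h z) <= C * sqnorm z) -> 0 <= C ->
  sqnorm (Nat.iter k h z) <= C ^ k * sqnorm z.
Proof.
move=> h_bound C_ge0; elim: k => [|k IH] /=; first lra.
by apply: Rle_trans (h_bound _) _; rewrite Rmult_assoc; apply: Rmult_le_compat_l.
Qed.

End LinearMaps.

Lemma iter_cancel {X : Type} (f g : X -> X) k :
  cancel f g -> cancel (Nat.iter k f) (Nat.iter k g).
Proof. by move=> fK; elim: k => [|k IH] x //; rewrite Nat.iter_succ_r Nat.iter_succ fK IH. Qed.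

Lemma orbit_of_iter {X : Type} {f : X -> X} {y o} : orbit_of f y o ->
  forall n k, o (n + Z.of_nat k)%Z = Nat.iter k f (o n).
Proof.
move=> [_ o_step] n; elim => [|k IH]; first by rewrite Z.add_0_r.
by rewrite Nat2Z.inj_succ -Z.add_1_r Z.add_assoc o_step IH.
Qed.

Section GluedOrbit.
Context {X : Type} (f g : X -> X).

Definition glued_orbit (a b : X) (n : Z) : X :=
  if (n <=? 0)%Z then Nat.iter (Z.to_nat (- n)) g a else Nat.iter (Z.to_nat (n - 1)) f b.

Lemma glued_orbit_neg a b k : glued_orbit a b (- Z.of_nat k) = Nat.iter k g a.
Proof.
rewrite /glued_orbit; have -> : (- Z.of_nat k <=? 0)%Z = true by apply/Z.leb_le; lia.
by rewrite Z.opp_involutive Nat2Z.id.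
Qed.

Lemma glued_orbit_succ a b k : glued_orbit a b (1 + Z.of_nat k) = Nat.iter k f b.
Proof.
rewrite /glued_orbit; have -> : (1 + Z.of_nat k <=? 0)%Z = false by apply/Z.leb_gt; lia.
have -> : (1 + Z.of_nat k - 1 = Z.of_nat k)%Z by lia.
by rewrite Nat2Z.id.
Qed.

Hypothesis gK : cancel g f.

Lemma glued_orbit_step a b n : n <> 0%Z -> glued_orbit a b (n + 1) = f (glued_orbit a b n).
Proof.
move=> n_nz; case: (Z.le_gt_cases n (-1)) => n_sign.
- have -> : n = (- Z.of_nat (Z.to_nat (- n - 1)).+1)%Z by lia.
  have -> : (- Z.of_nat (Z.to_nat (- n - 1)).+1 + 1 = - Z.of_nat (Z.to_nat (- n - 1)))%Z by lia.
  by rewrite !glued_orbit_neg /= gK.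
- have -> : n = (1 + Z.of_nat (Z.to_nat (n - 1)))%Z by lia.
  have -> : (1 + Z.of_nat (Z.to_nat (n - 1)) + 1 =
             1 + Z.of_nat (Z.to_nat (n - 1)).+1)%Z by lia.
  by rewrite !glued_orbit_succ.
Qed.

Lemma glued_orbit_pseudo_orbit (dist : X -> X -> R) (delta : X -> R) a b :
  (forall x, dist x x = 0) -> (forall x, 0 < delta x) -> dist (f a) b < delta (f a) ->
  pseudo_orbit dist f delta (glued_orbit a b).
Proof.
move=> dist_refl delta_gt0 jump n; case: (Z.eq_dec n 0) => [-> | n_nz].
  by have := glued_orbit_neg a b 0; have := glued_orbit_succ a b 0; move=> /= -> ->.
by rewrite glued_orbit_step // dist_refl.
Qed.

End GluedOrbit.

Lemma pow_gt_eventually C q : 1 < q -> exists m, forall n, (m <= n)%nat -> C < q ^ n.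
Proof.
move=> q_gt1.
have [m m_large] : exists m, forall n, (n >= m)%coq_nat -> Rabs (q ^ n) >= C + 1.
  by apply: Pow_x_infinity; rewrite Rabs_pos_eq; lra.
exists m => n /leP /m_large; rewrite Rabs_pos_eq; [lra | apply: pow_le; lra].
Qed.

Lemma geometric_weight_small {C q s r c : R} (P : nat) (y : nat -> R) :
  0 < C -> 1 < q -> C < q ^ P -> 0 < s -> 0 < c -> (forall k, s * q ^ k - r <= y k) ->
  exists k, C ^ k * / (1 + y k) ^ P < c.
Proof.
move=> C_gt0 q_gt1 C_lt s_gt0 c_gt0 y_ge.
have qP_gt0 : 0 < q ^ P by apply: pow_lt; lra.
have s2P_gt0 : 0 < (s / 2) ^ P by apply: pow_lt; lra.
have [k1 k1_large] := pow_gt_eventually (2 * r / s) _ q_gt1.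
have ratio_lt1 : Rabs (C / q ^ P) < 1.
  rewrite Rabs_pos_eq; last by apply: Rlt_le; apply: Rdiv_lt_0_compat.
  by apply: (Rmult_lt_reg_r (q ^ P)) => //; rewrite /Rdiv Rmult_assoc Rinv_l; lra.
have [k2 k2_small] := pow_lt_1_zero _ ratio_lt1 (c * (s / 2) ^ P) ltac:(nra).
exists (maxn k1 k2).
set k := maxn k1 k2; have qk_gt0 : 0 < q ^ k by apply: pow_lt; lra.
have y_large : s * q ^ k / 2 <= 1 + y k.
  have : 2 * r < s * q ^ k.
    have -> : 2 * r = s * (2 * r / s) by field; lra.
    by apply: Rmult_lt_compat_l => //; apply: k1_large; apply: leq_maxl.
  by have := y_ge k; lra.
have small := k2_small k ltac:(apply/leP; exact: leq_maxr).
rewrite Rabs_pos_eq in small; last by apply: pow_le; apply: Rlt_le; apply: Rdiv_lt_0_compat.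
have ratioE : (C / q ^ P) ^ k = C ^ k * / (q ^ P) ^ k.
  by rewrite /Rdiv Rpow_mult_distr pow_inv.
have weight_le : / (1 + y k) ^ P <= / ((s / 2) ^ P * (q ^ P) ^ k).
  apply: Rinv_le_contravar; first by apply: Rmult_lt_0_compat => //; apply: pow_lt.
  have -> : (s / 2) ^ P * (q ^ P) ^ k = (s * q ^ k / 2) ^ P.
    by rewrite -pow_mult Nat.mul_comm pow_mult -Rpow_mult_distr; congr (_ ^ _); field.
  by apply: pow_incr; split; [nra | lra].
apply: Rle_lt_trans (Rmult_le_compat_l _ _ _ (pow_le _ _ (Rlt_le _ _ C_gt0)) weight_le) _.
rewrite Rinv_mult Rmult_comm Rmult_assoc (Rmult_comm _ (C ^ k)) -ratioE.
apply: (Rmult_lt_reg_l ((s / 2) ^ P)) => //.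
rewrite -Rmult_assoc Rinv_r; lra.
Qed.

Lemma weighted_shadow_exact {d : nat} {h : Rd d -> Rd d} {C q s r : R} {p z : Rd d}
    (P : nat) (a x : nat -> Rd d) :
  linear_map h -> (forall w, sqnorm (h w) <= C * sqnorm w) -> 0 < C ->
  1 < q -> C < q ^ P -> 0 < s -> (forall k, s * q ^ k - r <= sqnorm (x k)) ->
  (forall k, euclid_dist (a k) (x k) < weight P (x k)) ->
  (forall k, Nat.iter k h (a k) = p) -> (forall k, Nat.iter k h (x k) = z) -> p = z.
Proof.
move=> h_lin h_bound C_gt0 q_gt1 C_lt s_gt0 x_large a_close a_iter x_iter.
apply: vsub_eq0 => c c_gt0.
have [k k_small] :=
  geometric_weight_small P (fun k => sqnorm (x k)) C_gt0 q_gt1 C_lt s_gt0 c_gt0 x_large.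
apply: Rle_lt_trans k_small.
rewrite -(a_iter k) -(x_iter k) -linear_vsub; last exact: linear_iter.
apply: Rle_trans (sqnorm_iter_le h C k _ h_bound (Rlt_le _ _ C_gt0)) _.
apply: Rmult_le_compat_l; first by apply: pow_le; lra.
have := weight_gt0 P (x k); have := weight_le1 P (x k).
by move: (a_close k) => /sqnorm_lt_of_dist_lt; rewrite /weight; nra.
Qed.

Section SaddleShadow.
Context {d : nat} {f g : Rd d -> Rd d} {lam mu t : R} {u v : Rd d} {P : nat}.
Hypotheses (f_lin : linear_map f) (fK : cancel f g) (gK : cancel g f).
Hypotheses (fu : f u = vscale lam u) (fv : f v = vscale mu v).
Hypotheses (u_nz : u <> vzero) (v_nz : v <> vzero).
Hypotheses (lam_gt1 : 1 < lam) (mu_gt0 : 0 < mu) (mu_lt1 : mu < 1) (t_gt0 : 0 < t).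

Let b := vadd (f v) (vscale t u).
Let x := glued_orbit f g v b.

Context {y : Rd d} {o : Z -> Rd d}.
Hypotheses (o_orbit : orbit_of f y o)
  (o_close : forall n, euclid_dist (o n) (x n) < weight P (x n)).

Lemma shadow_exact_at_0 {L : R} : (forall z, sqnorm (f z) <= L * sqnorm z) -> 0 < L ->
  L < ((/ mu) ^ 2) ^ P -> o 0%Z = v.
Proof.
move=> f_bound L_gt0 L_lt.
have gv : g v = vscale (/ mu) v by apply: inverse_eigen f_lin fK fv _; lra.
have inv_mu_gt1 : 1 < / mu by rewrite -Rinv_1; apply: Rinv_lt_contravar; lra.
have inv_mu2_gt1 : 1 < (/ mu) ^ 2 by nra.
apply: (weighted_shadow_exact (r := 0) P
          (fun k => o (- Z.of_nat k)%Z) (fun k => x (- Z.of_nat k)%Z)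
          f_lin f_bound L_gt0 inv_mu2_gt1 L_lt (sqnorm_gt0 _ v_nz)) => k.
- rewrite /x glued_orbit_neg (sqnorm_iter_eigen _ _ _ _ (linear_inverse _ _ f_lin fK gK) gv).
  by rewrite -pow_mult Nat.mul_comm pow_mult; lra.
- exact: o_close.
- by rewrite -(orbit_of_iter o_orbit) Z.add_opp_diag_l.
- by rewrite /x glued_orbit_neg iter_cancel.
Qed.

Lemma shadow_exact_at_1 {K : R} : (forall z, sqnorm (g z) <= K * sqnorm z) -> 0 < K ->
  K < (lam ^ 2) ^ P -> o 1%Z = b.
Proof.
move=> g_bound K_gt0 K_lt.
have lam2_gt1 : 1 < lam ^ 2 by nra.
apply: (weighted_shadow_exact (s := t ^ 2 * sqnorm u / 2) (r := sqnorm (f v)) P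
          (fun k => o (1 + Z.of_nat k)%Z) (fun k => x (1 + Z.of_nat k)%Z)
          (linear_inverse _ _ f_lin fK gK) g_bound K_gt0 lam2_gt1 K_lt) => [|k|k|k|k].
- by have := sqnorm_gt0 _ u_nz; have := pow_lt _ 2 t_gt0; nra.
- rewrite /x glued_orbit_succ /b.
  apply: (sqnorm_iter_saddle_ge f lam mu u (f v) t k f_lin fu); last by nra.
  by have [_ f_scale] := f_lin; rewrite {1}fv f_scale.
- exact: o_close.
- by rewrite (orbit_of_iter o_orbit) iter_cancel.
- by rewrite /x glued_orbit_succ iter_cancel.
Qed.

End SaddleShadow.

Theorem mainTheorem5 (d : nat) (f : Rd d -> Rd d) (lam mu : R) :
  linear_iso f ->
  real_eigenvalue f lam -> 1 < lam ->
  real_eigenvalue f mu -> 0 < mu -> mu < 1 ->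
  ~ topological_shadowing (@euclid_dist d) f.
Proof.
move=> [f_lin [g [fK gK]]] [u [u_nz fu]] lam_gt1 [v [v_nz fv]] mu_gt0 mu_lt1 shadowing.
have [L [L_gt0 f_bound]] := linear_sqnorm_bound f f_lin.
have [K [K_gt0 g_bound]] := linear_sqnorm_bound g (linear_inverse _ _ f_lin fK gK).
have inv_mu_gt1 : 1 < / mu by rewrite -Rinv_1; apply: Rinv_lt_contravar; lra.
have [P1 P1_large] := pow_gt_eventually L ((/ mu) ^ 2) ltac:(nra).
have [P2 P2_large] := pow_gt_eventually K (lam ^ 2) ltac:(nra).
set P := maxn P1 P2.
have [delta [[delta_gt0 _] delta_shadows]] := shadowing _ (weight_Cplus P).
have [t [t_gt0 jump]] := exists_small_step (f v) u _ (delta_gt0 (f v)).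
have pseudo :
    pseudo_orbit (@euclid_dist d) f delta (glued_orbit f g v (vadd (f v) (vscale t u))).
  by apply: glued_orbit_pseudo_orbit => //; apply: euclid_dist_refl.
have [y [o [o_orbit o_close]]] := delta_shadows _ pseudo.
have o0 := shadow_exact_at_0 f_lin fK gK fv v_nz mu_gt0 mu_lt1 o_orbit o_close
             f_bound L_gt0 (P1_large P (leq_maxl _ _)).
have o1 := shadow_exact_at_1 f_lin fK gK fu fv u_nz lam_gt1 mu_gt0 mu_lt1 t_gt0 o_orbit o_close
             g_bound K_gt0 (P2_large P (leq_maxr _ _)).
have [_ o_step] := o_orbit.
have := o_step 0%Z; rewrite /= o0 o1 => jump_vanishes.
exact: u_nz (vadd_vscale_eq_id _ _ _ jump_vanishes (Rgt_not_eq _ _ t_gt0)).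
Qed.
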